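(* Let $G=(\{f_i\},\{c_i\},\{X_i\},W)$ be a networked public goods game (as in the context). Suppose there exist $\boldsymbol{\gamma}\in\mathbb{R}_{++}^n$ and constants $c, L_0\ge 0$ such that (1) for every $i$ and every fixed $d\in[\underline{d}_i,\bar{d}_i]$, the function $x\mapsto\gamma_i\big(f_i(x+d)-c_i(x)\big)$ is $c$-concave on $X_i$; (2) $f_i'$ is $L_0$-Lipschitz for every $i$; (3) $c>L_0\,\sigma_{\max}(\Sigma)$, where $\Sigma=(\sigma_{ij})$ with $\sigma_{ij}=\sum_{k\ne i}\gamma_k|w_{ki}w_{kj}|$ and $\sigma_{\max}$ denotes the maximum singular value. Then $G$ has a unique (pure) Nash equilibrium.
   Context: There are $n$ players; player $i$ chooses effort $x_i\in X_i=[\underline{x}_i,\bar{x}_i]$, $X=\prod_iX_i$. $W=(w_{ij})$ is a real $n\times n$ matrix with $w_{ii}=1$. The gain of $i$ is $k_i=\sum_jw_{ij}x_j\in K_i=[\underline{k}_i,\bar{k}_i]$ (min and max over $X$). $f_i:K_i\to\mathbb{R}$ is twice differentiable, concave and strictly increasing; $c_i:X_i\to\mathbb{R}$ is twice differentiable, convex and strictly increasing; utility $u_i(\mathbf{x})=f_i(k_i)-c_i(x_i)$. A Nash equilibrium is $\mathbf{x}\in X$ with $u_i(x_i',\mathbf{x}_{-i})\le u_i(\mathbf{x})$ for all $i$, $x_i'\in X_i$. The externality gain bounds are $\underline{d}_i=\sum_{j\ne i}\big(\mathbf{1}\{w_{ij}>0\}w_{ij}\underline{x}_j+\mathbf{1}\{w_{ij}<0\}w_{ij}\bar{x}_j\big)$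 and $\bar{d}_i=\sum_{j\ne i}\big(\mathbf{1}\{w_{ij}>0\}w_{ij}\bar{x}_j+\mathbf{1}\{w_{ij}<0\}w_{ij}\underline{x}_j\big)$. A differentiable $g$ on a convex set is $c$-concave if $g(y)\le g(x)+\langle y-x,\nabla g(x)\rangle-\frac c2\|y-x\|^2$ for all $x,y$. *)

From HB Require Import structures.
From mathcomp Require Import all_boot all_order all_algebra.
From mathcomp Require Import reals.
Set Implicit Arguments. Unset Strict Implicit. Unset Printing Implicit Defensive.
Import Order.TTheory GRing.Theory Num.Theory.
Local Open Scope ring_scope.

Section Defs.
Variable R : realType.

Definition deriv_on (a b : R) (f df : R -> R) : Prop :=
  forall x, a <= x <= b -> forall e : R, 0 < e -> exists2 del : R, 0 < del &
    forall y, a <= y <= b -> `|y - x| < del ->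
      `|f y - f x - df x * (y - x)| <= e * `|y - x|.

Definition concave_on (a b : R) (f : R -> R) : Prop :=
  forall x y t, a <= x <= b -> a <= y <= b -> 0 <= t <= 1 ->
    t * f x + (1 - t) * f y <= f (t * x + (1 - t) * y).

Definition convex_on (a b : R) (f : R -> R) : Prop :=
  forall x y t, a <= x <= b -> a <= y <= b -> 0 <= t <= 1 ->
    f (t * x + (1 - t) * y) <= t * f x + (1 - t) * f y.

Definition strictly_increasing_on (a b : R) (f : R -> R) : Prop :=
  forall x y, a <= x -> x < y -> y <= b -> f x < f y.

Definition lipschitz_on (a b L : R) (g : R -> R) : Prop :=
  forall x y, a <= x <= b -> a <= y <= b -> `|g x - g y| <= L * `|x - y|.

Definition c_concave_on (a b c : R) (g : R -> R) : Prop :=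
  (exists dg, deriv_on a b g dg) /\
  forall dg, deriv_on a b g dg ->
    forall x y, a <= x <= b -> a <= y <= b ->
      g y <= g x + (y - x) * dg x - c / 2 * (y - x) ^+ 2.

Definition singular_value n (A : 'M[R]_n) (s : R) : Prop :=
  0 <= s /\ eigenvalue (A^T *m A) (s ^+ 2).

Variable n : nat.

Definition gain (W : 'M[R]_n) (x : 'I_n -> R) (i : 'I_n) : R :=
  \sum_(j < n) W i j * x j.

Definition dlo (W : 'M[R]_n) (xlo xhi : 'I_n -> R) (i : 'I_n) : R :=
  \sum_(j < n | j != i)
     (if 0 < W i j then W i j * xlo j else if W i j < 0 then W i j * xhi j else 0).

Definition dhi (W : 'M[R]_n) (xlo xhi : 'I_n -> R) (i : 'I_n) : R :=
  \sum_(j < n | j != i)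
     (if 0 < W i j then W i j * xhi j else if W i j < 0 then W i j * xlo j else 0).

(* K_i = [min_X k_i, max_X k_i]; since w_ii = 1 these are xlo_i + dlo_i, xhi_i + dhi_i *)
Definition klo W xlo xhi i := xlo i + dlo W xlo xhi i.
Definition khi W xlo xhi i := xhi i + dhi W xlo xhi i.

Definition utility (W : 'M[R]_n) (f cst : 'I_n -> R -> R) (x : 'I_n -> R) i : R :=
  f i (gain W x i) - cst i (x i).

Definition update (x : 'I_n -> R) (i : 'I_n) (v : R) : 'I_n -> R :=
  fun j => if j == i then v else x j.

Definition in_X (xlo xhi : 'I_n -> R) (x : 'I_n -> R) : Prop :=
  forall i, xlo i <= x i <= xhi i.

Definition nash_equilibrium W xlo xhi (f cst : 'I_n -> R -> R) (x : 'I_n -> R) : Prop :=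
  in_X xlo xhi x /\
  forall i v, xlo i <= v <= xhi i ->
    utility W f cst (update x i v) i <= utility W f cst x i.

Definition Sigma (W : 'M[R]_n) (gamma : 'I_n -> R) : 'M[R]_n :=
  \matrix_(i, j) \sum_(k < n | k != i) gamma k * `|W k i * W k j|.

End Defs.

(* Let [T x] be the proximal best response to a profile [x]: player [i] maximizes
   [gamma_i u_i(v, x_-i) - (v - x_i)^2 / 2] over [X_i]. By the first-order condition, which
   [c]-concavity with [c >= 0] makes sufficient, the Nash equilibria are exactly the fixed
   points of [T]. Comparing the first-order conditions at two profiles [x] and [y],
   [c]-concavity makes the own-effort term strongly monotone, while the [L0]-Lipschitz [f_i']
   bounds the effect of the others by [gamma_i L0 sum_(j <> i) |w_ij| |x_j - y_j|]; summing
   these through [Sigma] gives [(1 + c) |T x - T y| <= (1 + L0 s) |x - y|] in the Euclidean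
   norm, where the singular value [s] comes from maximizing [|Sigma u|] on the unit sphere.
   As [L0 s < c], [T] is a contraction of the compact box [X], so it has exactly one fixed
   point. *)

From HB Require Import structures.
From mathcomp Require Import all_boot all_order all_algebra.
From mathcomp Require Import reals boolp classical_sets topology normedtype derive.
From mathcomp Require Import ring lra.
Import Order.TTheory GRing.Theory Num.Theory.
Import numFieldNormedType.Exports.
Local Open Scope ring_scope.
Local Open Scope classical_set_scope.

Set Implicit Arguments.
Unset Strict Implicit.
Unset Printing Implicit Defensive.

Section EuclideanNorm.
Variables (R : realType) (n : nat).
Implicit Types u v : 'I_n -> R.

Definition dotv u v := \sum_i u i * v i.
Definition sqnorm u := \sum_i u i ^+ 2.
Definition enorm u := Num.sqrt (sqnorm u).

Lemma sqnorm_ge0 u : 0 <= sqnorm u.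
Proof. by apply: sumr_ge0 => i _; exact: sqr_ge0. Qed.

Lemma sqnorm_eq0 u : sqnorm u = 0 -> forall i, u i = 0.
Proof.
move=> /psumr_eq0P u0 i; apply/eqP; rewrite -sqrf_eq0; apply/eqP.
by apply: u0 => // j _; exact: sqr_ge0.
Qed.

Lemma enorm_ge0 u : 0 <= enorm u.
Proof. exact: sqrtr_ge0. Qed.

Lemma sqr_enorm u : enorm u ^+ 2 = sqnorm u.
Proof. by rewrite sqr_sqrtr // sqnorm_ge0. Qed.

Lemma enorm_eq0 u : enorm u = 0 -> forall i, u i = 0.
Proof. by move=> u0; apply: sqnorm_eq0; rewrite -sqr_enorm u0 expr0n. Qed.

Lemma sqnormZ t u : sqnorm (fun i => t * u i) = t ^+ 2 * sqnorm u.
Proof. by rewrite /sqnorm mulr_sumr; apply: eq_bigr => i _; rewrite exprMn. Qed.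

Lemma sqnormDZ t u v :
  sqnorm (fun i => u i + t * v i) = sqnorm u + 2 * t * dotv u v + t ^+ 2 * sqnorm v.
Proof.
by rewrite /sqnorm /dotv !mulr_sumr -!big_split; apply: eq_bigr => i _ /=; ring.
Qed.

Lemma sqnorm_abs u : sqnorm (fun i => `|u i|) = sqnorm u.
Proof. by apply: eq_bigr => i _; rewrite real_normK ?num_real. Qed.

Lemma abs_le_enorm u i : `|u i| <= enorm u.
Proof.
rewrite -sqrtr_sqr ler_sqrt ?sqnorm_ge0 // /sqnorm (bigD1 i) //= lerDl.
by apply: sumr_ge0 => j _; exact: sqr_ge0.
Qed.

Lemma enorm_le_coord_bound d u : 0 <= d -> (forall i, `|u i| <= d) -> enorm u <= n%:R * d.
Proof.
move=> d0 ud; rewrite -[_ * d]ger0_norm ?mulr_ge0 // -sqrtr_sqr ler_sqrt ?sqr_ge0 //.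
apply: (@le_trans _ _ (\sum_(i < n) d ^+ 2)).
  by apply: ler_sum => i _; rewrite -real_normK ?num_real // lerXn2r ?nnegrE.
rewrite sumr_const card_ord -(mulr_natl (d ^+ 2)) exprMn ler_wpM2r ?sqr_ge0 //.
by rewrite -natrX ler_nat; case: (n) => // k; rewrite expnS leq_pmulr.
Qed.

Lemma dotv_le_enorm u v : dotv u v <= enorm u * enorm v.
Proof.
have [v0|v0] := eqVneq (sqnorm v) 0.
  rewrite /dotv big1 ?mulr_ge0 ?enorm_ge0 // => i _.
  by rewrite (sqnorm_eq0 v0) mulr0.
have v_gt0 : 0 < sqnorm v by rewrite lt_def v0 sqnorm_ge0.
have := sqnorm_ge0 (fun i => u i + (- dotv u v / sqnorm v) * v i).
rewrite sqnormDZ (_ : _ + _ + _ = (sqnorm u * sqnorm v - dotv u v ^+ 2) / sqnorm v); last first.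
  by field; exact: lt0r_neq0.
rewrite pmulr_lge0 ?invr_gt0 // subr_ge0 => sq.
apply: le_trans (ler_norm _) _.
by rewrite -sqrtr_sqr /enorm -sqrtrM ?sqnorm_ge0 // ler_sqrt // mulr_ge0 ?sqnorm_ge0.
Qed.

End EuclideanNorm.

Lemma row_ord0 (T : Type) n (y : 'I_n -> T) : (\row_i y i) ord0 = y.
Proof. by apply/funext => i; rewrite mxE. Qed.

Section Topology.
Variable R : realType.

Lemma continuous_sum (T : topologicalType) (I : Type) (s : seq I) (F : I -> T -> R) :
  (forall i, continuous (F i)) -> continuous (fun x => \sum_(i <- s) F i x).
Proof.
move=> F_cont x; elim: s => [|i s IHs].
  by under eq_fun do rewrite big_nil; exact: cst_continuous.
by under eq_fun do rewrite big_cons; apply: continuousD; [exact: F_cont | exact: IHs].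
Qed.

Lemma within_continuous_eps (V : normedModType R) (A : set V) (f : V -> R) :
  (forall x e, A x -> 0 < e -> exists2 d, 0 < d &
     forall y, A y -> `|y - x| < d -> `|f y - f x| < e) ->
  {within A, continuous f}.
Proof.
move=> H; apply/subspace_continuousP => x Ax; apply/cvgrPdist_lt => e e0.
have [d d0 Hd] := H x e Ax e0.
rewrite near_withinE; near=> y => Ay; rewrite distrC; apply: Hd Ay _.
by near: y; apply/nbhs_normP; exists d => //= y; rewrite distrC.
Unshelve. all: by end_near.
Qed.

Lemma entry_le_mx_norm m n (M : 'M[R]_(m, n)) i j : `|M i j| <= `|M|.
Proof. by rewrite [`|M|]mx_normrE (le_bigmax _ (fun k => `|M k.1 k.2|) (i, j)). Qed.

Variable n : nat.

Definition box (lo hi : 'I_n -> R) : set 'rV[R]_n := [set v | in_X lo hi (v ord0)].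

Lemma box_compact lo hi : compact (box lo hi).
Proof.
have := rV_compact (fun i => @segment_compact R (lo i) (hi i)).
by congr compact; apply/funext => v /=; apply/propext; split => vX i; have := vX i; rewrite /= in_itv.
Qed.

Lemma box_min lo hi (phi : ('I_n -> R) -> R) : (forall i, lo i <= hi i) ->
  {within box lo hi, continuous (fun v => phi (v ord0))} ->
  exists2 x, in_X lo hi x & forall y, in_X lo hi y -> phi x <= phi y.
Proof.
move=> lohi phi_cont.
have box0 : box lo hi !=set0 by exists (\row_i lo i) => i; rewrite mxE lexx lohi.
have [v] := EVT_min_rV box0 (@box_compact lo hi) phi_cont.
rewrite inE => vX vmin; exists (fun i => v ord0 i) => // y yX.
by rewrite -(row_ord0 y); apply: vmin; rewrite inE /box /= row_ord0.
Qed.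

End Topology.

Lemma unit_sphere_max (R : realType) n (phi : ('I_n.+1 -> R) -> R) :
  continuous (fun v : 'rV[R]_n.+1 => phi (v ord0)) ->
  exists2 u, sqnorm u = 1 & forall w, sqnorm w = 1 -> phi w <= phi u.
Proof.
move=> phi_cont; pose sphere := [set v : 'rV[R]_n.+1 | sqnorm (v ord0) = 1].
have sphere0 : sphere (\row_i (i == ord0)%:R).
  rewrite /sphere /= row_ord0 /sqnorm (bigD1 ord0) //= expr1n big1 ?addr0 // => i /negbTE ->.
  by rewrite expr0n.
have sqnorm_cont : continuous (fun v : 'rV[R]_n.+1 => sqnorm (v ord0)).
  apply: continuous_sum => i; under eq_fun do rewrite expr2.
  by move=> v; apply: continuousM; exact: coord_continuous.
have sphere_closed : closed sphere.
  exact: (proj1 (continuous_closedP _) sqnorm_cont _ (@closed_eq _ 1)).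
have sphere_box : sphere `<=` box (fun=> -1) (fun=> 1).
  move=> v /= v1 i; rewrite -ler_norml -(expr_le1 (n := 2)) //= real_normK ?num_real //.
  by rewrite -v1 /sqnorm (bigD1 i) //= lerDl sumr_ge0 // => j _; exact: sqr_ge0.
have sphere_compact : compact sphere.
  by apply: subclosed_compact sphere_closed _ sphere_box; exact: box_compact.
have [v] := EVT_max_rV (ex_intro _ _ sphere0) sphere_compact (continuous_subspaceT phi_cont).
rewrite inE => v1 vmax; exists (fun i => v ord0 i) => // w w1.
by rewrite -(row_ord0 w); apply: vmax; rewrite inE /sphere /= row_ord0.
Qed.

(* The residual [sqnorm (T x \- x)] is continuous on the box and a contraction strictly
   decreases it away from fixed points, so its minimum is a fixed point. *)
Lemma box_contraction_fixed_point (R : realType) n (lo hi : 'I_n -> R)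
    (T : ('I_n -> R) -> 'I_n -> R) (q : R) :
  (forall i, lo i <= hi i) -> q < 1 ->
  (forall x, in_X lo hi x -> in_X lo hi (T x)) ->
  (forall x y, in_X lo hi x -> in_X lo hi y -> enorm (T x \- T y) <= q * enorm (x \- y)) ->
  exists2 x, in_X lo hi x & T x = x.
Proof.
move=> lohi q_lt1 T_box T_contr.
have T_lip x y : in_X lo hi x -> in_X lo hi y -> enorm (T x \- T y) <= enorm (x \- y).
  move=> xX yX; apply: le_trans (T_contr x y xX yX) _.
  by rewrite ler_piMl ?enorm_ge0 // ltW.
have T_cont i : {within box lo hi, continuous (fun v => T (v ord0) i)}.
  apply: within_continuous_eps => v e vX e_gt0.
  have n1_gt0 : 0 < n%:R + 1 :> R by rewrite ltr_wpDl.
  exists (e / (n%:R + 1)) => [|w wX wv]; first exact: divr_gt0.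
  apply: le_lt_trans (abs_le_enorm (T (w ord0) \- T (v ord0)) i) _.
  apply: le_lt_trans (T_lip _ _ wX vX) _.
  apply: le_lt_trans (enorm_le_coord_bound (normr_ge0 (w - v)) _) _.
    by move=> j; have := entry_le_mx_norm (w - v) ord0 j; rewrite !mxE.
  rewrite -(ltr_pM2r n1_gt0) in wv; rewrite divfK ?gt_eqF // in wv.
  by apply: le_lt_trans wv; rewrite mulrC ler_wpM2l ?normr_ge0 // lerDl.
pose res x := sqnorm (T x \- x).
have res_cont : {within box lo hi, continuous (fun v => res (v ord0))}.
  apply: continuous_sum => i; under eq_fun do rewrite /= expr2.
  have coord_cont : {within box lo hi, continuous (fun v => v ord0 i)}.
    exact/continuous_subspaceT/coord_continuous.
  pose r (v : subspace (box lo hi)) := T (v ord0) i - v ord0 i.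
  have r_cont : continuous r by move=> v; apply: continuousB; [exact: T_cont | exact: coord_cont].
  by move=> v; exact: (continuousM (r_cont v) (r_cont v)).
have [x xX xmin] := box_min lohi res_cont.
have [res0|res_neq0] := eqVneq (enorm (T x \- x)) 0.
  exists x => //; apply/funext => i; apply/eqP; rewrite -subr_eq0; exact/eqP/(enorm_eq0 res0).
exfalso.
have res_gt0 : 0 < enorm (T x \- x) by rewrite lt_def res_neq0 enorm_ge0.
have res_decr : enorm (T (T x) \- T x) < enorm (T x \- x).
  apply: le_lt_trans (T_contr _ _ (T_box x xX) xX) _.
  by rewrite gtr_pMl.
have := xmin _ (T_box x xX); rewrite /res -!sqr_enorm leNgt.
by rewrite ltrXn2r ?res_decr ?enorm_ge0.
Qed.

Section SingularValue.
Variables (R : realType) (n : nat).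
Implicit Types (S : 'M[R]_n) (u v : 'I_n -> R).

Definition mxv S u : 'I_n -> R := fun i => \sum_j S i j * u j.

Lemma mxvDZ S t u v : mxv S (fun i => u i + t * v i) = fun i => mxv S u i + t * mxv S v i.
Proof.
by apply/funext => i; rewrite /mxv mulr_sumr -big_split; apply: eq_bigr => j _ /=; ring.
Qed.

Lemma mxvZ S t u : mxv S (fun i => t * u i) = fun i => t * mxv S u i.
Proof. by apply/funext => i; rewrite /mxv mulr_sumr; apply: eq_bigr => j _; ring. Qed.

Lemma quadratic_ge0_linear_coef_eq0 (b d : R) : 0 <= d ->
  (forall t, 0 <= 2 * t * b + t ^+ 2 * d) -> b = 0.
Proof.
move=> d_ge0 quad_ge0; apply/eqP; apply: contraT => b_neq0.
have d1_gt0 : 0 < d + 1 by lra.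
pose t := - b / (d + 1).
have t_def : t * (d + 1) = - b by rewrite /t divfK ?gt_eqF.
have := quad_ge0 t; rewrite -[b]opprK -t_def.
rewrite (_ : _ + _ = - (t ^+ 2 * (d + 2))); last by ring.
rewrite oppr_ge0 pmulr_lle0 ?ltr_wpDl // => t2_le0.
have t0 : t = 0 by apply/eqP; rewrite -sqrf_eq0 eq_le t2_le0 sqr_ge0.
by move: t_def b_neq0; rewrite t0 mul0r => /eqP; rewrite eq_sym oppr_eq0 => ->.
Qed.

(* The first variation [lam * dotv u w = dotv (mxv S u) (mxv S w)] vanishes in every
   direction [w]. *)
Lemma rayleigh_eigenvalue S u : sqnorm u = 1 ->
  (forall v, sqnorm (mxv S v) <= sqnorm (mxv S u) * sqnorm v) ->
  eigenvalue (S^T *m S) (sqnorm (mxv S u)).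
Proof.
set lam := sqnorm (mxv S u) => u1 u_max.
have first_variation w : lam * dotv u w = dotv (mxv S u) (mxv S w).
  apply/eqP; rewrite -subr_eq0; apply/eqP.
  apply: (@quadratic_ge0_linear_coef_eq0 _ (lam * sqnorm w - sqnorm (mxv S w))).
    by rewrite subr_ge0; exact: u_max.
  move=> t; have := u_max (fun i => u i + t * w i).
  rewrite mxvDZ !sqnormDZ u1 -subr_ge0.
  by rewrite [X in 0 <= X -> _](_ : _ = 2 * t * (lam * dotv u w - dotv (mxv S u) (mxv S w))
    + t ^+ 2 * (lam * sqnorm w - sqnorm (mxv S w))) //; rewrite /lam; ring.
apply/eigenvalueP; exists (\row_i u i); last first.
  apply/eqP => /rowP u0; move: u1; rewrite /sqnorm big1 => [/eqP|i _].
    by rewrite eq_sym oner_eq0.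
  by have := u0 i; rewrite !mxE => ->; rewrite expr0n.
apply/rowP => i; rewrite !mxE.
have := first_variation (fun j => (j == i)%:R).
rewrite /dotv (bigD1 i) //= eqxx mulr1 big1 ?addr0 => [->|j /negbTE ->]; last by rewrite mulr0.
under eq_bigr do rewrite !mxE mulr_sumr.
have delta_i k : \sum_j S k j * (j == i)%:R = S k i.
  by rewrite (bigD1 i) //= eqxx mulr1 big1 ?addr0 // => j /negbTE ->; rewrite mulr0.
rewrite exchange_big /=; apply: eq_bigr => k _.
by rewrite /mxv delta_i mulr_suml; apply: eq_bigr => j _; rewrite !mxE; ring.
Qed.

End SingularValue.

Lemma singular_value_bound (R : realType) n (S : 'M[R]_n.+1) :
  exists2 s, singular_value S s & forall u, sqnorm (mxv S u) <= s ^+ 2 * sqnorm u.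
Proof.
have Q_cont : continuous (fun v : 'rV[R]_n.+1 => sqnorm (mxv S (v ord0))).
  apply: continuous_sum => k; under eq_fun do rewrite expr2.
  have mxv_cont : continuous (fun v : 'rV[R]_n.+1 => mxv S (v ord0) k).
    apply: continuous_sum => j v.
    by apply: continuousM; [exact: cst_continuous | exact: coord_continuous].
  by move=> v; exact: continuousM (mxv_cont v) (mxv_cont v).
have [u u1 umax] := unit_sphere_max (phi := fun u => sqnorm (mxv S u)) Q_cont.
set lam := sqnorm (mxv S u) in umax.
have Q_le v : sqnorm (mxv S v) <= lam * sqnorm v.
  have [v0|v_neq0] := eqVneq (enorm v) 0.
    rewrite -(sqr_enorm v) v0 expr0n mulr0 /sqnorm big1 // => i _.
    by rewrite /mxv big1 ?expr0n // => j _; rewrite (enorm_eq0 v0) mulr0.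
  have v_gt0 : 0 < enorm v by rewrite lt_def v_neq0 enorm_ge0.
  have := umax (fun i => (enorm v)^-1 * v i).
  rewrite mxvZ !sqnormZ -(sqr_enorm v) exprVn mulVf ?sqrf_eq0 // => /(_ erefl).
  by rewrite mulrC ler_pdivrMr ?exprn_gt0.
have lam_ge0 : 0 <= lam by exact: sqnorm_ge0.
exists (Num.sqrt lam); last by move=> v; rewrite sqr_sqrtr.
by split; [exact: sqrtr_ge0 | rewrite sqr_sqrtr //; exact: rayleigh_eigenvalue].
Qed.

Section DerivOn.
Variable R : realType.
Implicit Types (a b : R) (f g df dg : R -> R).

Lemma deriv_onB a b f df g dg : deriv_on a b f df -> deriv_on a b g dg ->
  deriv_on a b (fun x => f x - g x) (fun x => df x - dg x).
Proof.
move=> f_der g_der x xab e e_gt0.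
have e2_gt0 : 0 < e / 2 by rewrite divr_gt0.
have [d1 d1_gt0 Hf] := f_der x xab _ e2_gt0.
have [d2 d2_gt0 Hg] := g_der x xab _ e2_gt0.
exists (Num.min d1 d2) => [|y yab]; first by rewrite lt_min d1_gt0 d2_gt0.
rewrite lt_min => /andP[yd1 yd2].
rewrite (_ : _ - _ - _ = (f y - f x - df x * (y - x)) - (g y - g x - dg x * (y - x))); last by ring.
apply: le_trans (ler_normB _ _) _.
by have := Hf y yab yd1; have := Hg y yab yd2; lra.
Qed.

Lemma deriv_onZ a b k f df : deriv_on a b f df ->
  deriv_on a b (fun x => k * f x) (fun x => k * df x).
Proof.
move=> f_der x xab e e_gt0.
have k1_gt0 : 0 < `|k| + 1 by rewrite ltr_wpDl.
have [d d_gt0 Hf] := f_der x xab _ (divr_gt0 e_gt0 k1_gt0).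
exists d => // y yab yd.
rewrite (_ : _ - _ - _ = k * (f y - f x - df x * (y - x))); last by ring.
rewrite normrM; apply: le_trans (ler_wpM2l (normr_ge0 k) (Hf y yab yd)) _.
by rewrite mulrA ler_wpM2r // mulrCA ger_pMr // ler_pdivrMr // mul1r lerDl.
Qed.

Lemma deriv_on_shift a b ka kb s f df : deriv_on ka kb f df ->
  ka <= a + s -> b + s <= kb -> deriv_on a b (fun x => f (x + s)) (fun x => df (x + s)).
Proof.
move=> f_der ka_le kb_ge x /andP[ax xb] e e_gt0.
have xsK : ka <= x + s <= kb by apply/andP; split; lra.
have [d d_gt0 Hf] := f_der _ xsK e e_gt0.
exists d => // y /andP[ay yb] yd.
have ysK : ka <= y + s <= kb by apply/andP; split; lra.
by have := Hf _ ysK; rewrite (_ : y + s - (x + s) = y - x) //; [exact | ring].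
Qed.

Lemma deriv_on_half_sqr a b x0 :
  deriv_on a b (fun y => (y - x0) ^+ 2 / 2) (fun y => y - x0).
Proof.
move=> x _ e e_gt0; exists e => // y _ yd.
rewrite (_ : _ - _ - _ = (y - x) ^+ 2 / 2); last by field.
rewrite normrM normrX [`|2^-1|]ger0_norm ?invr_ge0 ?ler0n //.
have := normr_ge0 (y - x); nra.
Qed.

Lemma deriv_on_continuous a b f df : deriv_on a b f df -> {within `[a, b], continuous f}.
Proof.
move=> f_der; apply: within_continuous_eps => x e /= xab e_gt0.
rewrite in_itv /= in xab.
have df1_gt0 : 0 < `|df x| + 1 by rewrite ltr_wpDl.
have [d d_gt0 Hf] := f_der x xab 1 ltr01.
exists (Num.min d (e / (`|df x| + 1))) => [|y]; first by rewrite lt_min d_gt0 divr_gt0.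
rewrite /= in_itv /= lt_min => yab /andP[yd ye].
have := Hf y yab yd; rewrite mul1r => Hy.
have lin_bound : `|f y - f x| <= (`|df x| + 1) * `|y - x|.
  have := ler_normD (f y - f x - df x * (y - x)) (df x * (y - x)).
  by rewrite subrK normrM; lra.
by apply: le_lt_trans lin_bound _; rewrite mulrC -ltr_pdivlMr.
Qed.

Lemma deriv_on_max_first_order a b h dh z : deriv_on a b h dh -> a <= z <= b ->
  (forall y, a <= y <= b -> h y <= h z) ->
  forall v, a <= v <= b -> dh z * (v - z) <= 0.
Proof.
move=> h_der zab zmax v vab; rewrite leNgt; apply/negP => p_gt0.
have vz_gt0 : 0 < `|v - z|.
  by rewrite normr_gt0; apply: contraTneq p_gt0 => ->; rewrite mulr0 ltxx.
set p := dh z * (v - z) in p_gt0.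
have e_gt0 : 0 < p / (2 * `|v - z|) by apply/divr_gt0/mulr_gt0.
have [d d_gt0 Hh] := h_der z zab _ e_gt0.
pose t := Num.min 1 (d / (2 * `|v - z|)).
have t_gt0 : 0 < t by rewrite lt_min ltr01; apply/divr_gt0/mulr_gt0.
have t_le1 : t <= 1 by rewrite ge_min lexx.
have td : t * `|v - z| < d.
  have : t <= d / (2 * `|v - z|) by rewrite ge_min lexx orbT.
  rewrite ler_pdivlMr ?mulr_gt0 //; lra.
have yab : a <= z + t * (v - z) <= b.
  by move: zab vab => /andP[az zb] /andP[av vb]; apply/andP; split; nra.
have := Hh _ yab; rewrite addrAC subrr add0r normrM (gtr0_norm t_gt0) => /(_ td).
rewrite mulrCA -/p (_ : p / _ * _ = t * p / 2); last by field; rewrite gt_eqF.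
have := zmax _ yab; rewrite ler_norml => hz /andP[lower _].
have := mulr_gt0 t_gt0 p_gt0; lra.
Qed.

(* [z] maximizes [g y - (y - x0)^2 / 2] on [[a, b]]: a proximal step from [x0] along [g]. *)
Lemma exists_prox_step a b x0 g dg : a <= b -> deriv_on a b g dg ->
  exists2 z, a <= z <= b & forall v, a <= v <= b -> (dg z - (z - x0)) * (v - z) <= 0.
Proof.
move=> ab g_der; have h_der := deriv_onB g_der (deriv_on_half_sqr x0).
have [z zab zmax] := EVT_max ab (deriv_on_continuous h_der).
rewrite in_itv /= in zab; exists z => //.
by apply: deriv_on_max_first_order h_der zab _ => y yab; apply: zmax; rewrite in_itv.
Qed.

End DerivOn.

Lemma Sigma_ge0 (R : realType) n (W : 'M[R]_n) (gamma : 'I_n -> R) j i :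
  (forall k, 0 <= gamma k) -> 0 <= Sigma W gamma j i.
Proof. by move=> gamma_ge0; rewrite /Sigma mxE sumr_ge0 // => k _; rewrite mulr_ge0. Qed.

Lemma Sigma_ge_offdiag (R : realType) n (W : 'M[R]_n) (gamma : 'I_n -> R) i j :
  (forall k, W k k = 1) -> (forall k, 0 <= gamma k) -> i != j ->
  gamma i * `|W i j| <= Sigma W gamma j i.
Proof.
move=> W_diag gamma_ge0 ij; rewrite /Sigma mxE (bigD1 i) //= W_diag mulr1 lerDl.
by rewrite sumr_ge0 // => k _; rewrite mulr_ge0.
Qed.

Lemma Sigma_weighted_bound (R : realType) n (W : 'M[R]_n) (gamma a b : 'I_n -> R) :
  (forall k, W k k = 1) -> (forall k, 0 <= gamma k) ->
  (forall i, 0 <= a i) -> (forall j, 0 <= b j) ->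
  \sum_i gamma i * a i * (\sum_(j < n | j != i) `|W i j| * b j)
    <= dotv b (mxv (Sigma W gamma) a).
Proof.
move=> W_diag gamma_ge0 a_ge0 b_ge0.
have -> : dotv b (mxv (Sigma W gamma) a) = \sum_i a i * \sum_j Sigma W gamma j i * b j.
  rewrite /dotv /mxv; under eq_bigr do rewrite mulr_sumr.
  rewrite exchange_big /=; apply: eq_bigr => i _; rewrite mulr_sumr.
  by apply: eq_bigr => j _; ring.
apply: ler_sum => i _; rewrite -mulrA mulrCA ler_wpM2l // mulr_sumr.
rewrite [X in _ <= X](bigD1 i) //= -[X in X <= _]add0r.
apply: lerD; first by rewrite mulr_ge0 ?Sigma_ge0.
apply: ler_sum => j ji; rewrite mulrA ler_wpM2r //.
by apply: Sigma_ge_offdiag => //; rewrite eq_sym.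
Qed.

Section NetworkGame.
Variables (R : realType) (n : nat) (W : 'M[R]_n) (xlo xhi : 'I_n -> R).
Variables (f df cst dcst : 'I_n -> R -> R) (gamma : 'I_n -> R) (c L0 : R).

Definition ext_gain (x : 'I_n -> R) i := \sum_(j < n | j != i) W i j * x j.
Definition payoff i d z := gamma i * (f i (z + d) - cst i z).
Definition dpayoff i d z := gamma i * (df i (z + d) - dcst i z).

(* [z i] maximizes [payoff i (ext_gain x i) v - (v - x i)^2 / 2] over [X_i], stated through
   its first-order condition. *)
Definition prox_point x z := in_X xlo xhi z /\ forall i v, xlo i <= v <= xhi i ->
  (dpayoff i (ext_gain x i) (z i) - (z i - x i)) * (v - z i) <= 0.

(* Otherwise [i] would become implicit below, as [deriv_on] and the like unfold to
   products that mention it. *)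
Unset Implicit Arguments.
Hypothesis W_diag : forall i, W i i = 1.
Hypothesis xlo_le_xhi : forall i, xlo i <= xhi i.
Hypothesis f_deriv : forall i, deriv_on (klo W xlo xhi i) (khi W xlo xhi i) (f i) (df i).
Hypothesis cst_deriv : forall i, deriv_on (xlo i) (xhi i) (cst i) (dcst i).
Hypothesis gamma_gt0 : forall i, 0 < gamma i.
Hypothesis c_ge0 : 0 <= c.
Hypothesis L0_ge0 : 0 <= L0.
Hypothesis payoff_concave : forall i d, dlo W xlo xhi i <= d <= dhi W xlo xhi i ->
  c_concave_on (xlo i) (xhi i) c (payoff i d).
Hypothesis df_lipschitz : forall i, lipschitz_on (klo W xlo xhi i) (khi W xlo xhi i) L0 (df i).
Set Implicit Arguments.

Lemma ext_gain_bounds x i : in_X xlo xhi x ->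
  dlo W xlo xhi i <= ext_gain x i <= dhi W xlo xhi i.
Proof.
move=> xX; apply/andP; split; apply: ler_sum => j _; have /andP[lo hi] := xX j;
  have [W_gt0|W_lt0|W0] := ltgtP 0 (W i j); rewrite -?W0 ?mul0r //.
- by rewrite ler_pM2l.
- by rewrite ler_nM2l.
- by rewrite ler_pM2l.
- by rewrite ler_nM2l.
Qed.

Lemma ext_gain_dist x y i :
  `|ext_gain x i - ext_gain y i| <= \sum_(j < n | j != i) `|W i j| * `|x j - y j|.
Proof.
rewrite /ext_gain -sumrB; apply: le_trans (ler_norm_sum _ _ _) _.
by apply: ler_sum => j _; rewrite -mulrBr normrM.
Qed.

Lemma utility_update x i v :
  utility W f cst (update x i v) i = f i (v + ext_gain x i) - cst i v.
Proof.
rewrite /utility /gain (bigD1 i) //= /update eqxx W_diag mul1r; congr (f i (_ + _) - _).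
by apply: eq_bigr => j /negbTE ->.
Qed.

Lemma utility_ext_gain x i : utility W f cst x i = f i (x i + ext_gain x i) - cst i (x i).
Proof. by rewrite /utility /gain (bigD1 i) //= W_diag mul1r. Qed.

Lemma deriv_on_payoff i d : dlo W xlo xhi i <= d <= dhi W xlo xhi i ->
  deriv_on (xlo i) (xhi i) (payoff i d) (dpayoff i d).
Proof.
move=> /andP[dlo_le dhi_ge]; apply/deriv_onZ/deriv_onB/cst_deriv.
have klo_le : klo W xlo xhi i <= xlo i + d by rewrite lerD2l.
have khi_ge : xhi i + d <= khi W xlo xhi i by rewrite lerD2l.
exact: deriv_on_shift (f_deriv i) klo_le khi_ge.
Qed.

Lemma exists_prox_point x : in_X xlo xhi x -> exists z, prox_point x z.
Proof.
move=> xX; have step i := exists_prox_step (x i) (xlo_le_xhi i)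
  (deriv_on_payoff (ext_gain_bounds i xX)).
have /choice [z zP] : forall i, exists zi, xlo i <= zi <= xhi i /\ forall v,
    xlo i <= v <= xhi i -> (dpayoff i (ext_gain x i) zi - (zi - x i)) * (v - zi) <= 0.
  by move=> i; have [zi ziX zi_opt] := step i; exists zi.
by exists z; split => [i|i]; [exact: (zP i).1 | exact: (zP i).2].
Qed.

Lemma nash_prox_point x : nash_equilibrium W xlo xhi f cst x -> prox_point x x.
Proof.
move=> [xX x_best]; split => // i v vX; rewrite subrr subr0.
apply: deriv_on_max_first_order (deriv_on_payoff (ext_gain_bounds i xX)) (xX i) _ _ vX.
move=> y yX; have := x_best i y yX; rewrite utility_update utility_ext_gain.
by apply: ler_wpM2l; exact: ltW.
Qed.

Lemma prox_point_nash x : prox_point x x -> nash_equilibrium W xlo xhi f cst x.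
Proof.
move=> [xX x_opt]; split => // i v vX.
have d_range := ext_gain_bounds i xX.
have := (payoff_concave i _ d_range).2 _ (deriv_on_payoff d_range) _ _ (xX i) vX.
have := x_opt i v vX; rewrite subrr subr0 utility_update utility_ext_gain => foc conc.
rewrite -(ler_pM2l (gamma_gt0 i)); apply: le_trans conc _.
have : 0 <= c / 2 * (v - x i) ^+ 2 by rewrite mulr_ge0 ?divr_ge0 ?sqr_ge0.
by rewrite /payoff mulrC in foc *; lra.
Qed.

Lemma dpayoff_strongly_monotone i d z z' : dlo W xlo xhi i <= d <= dhi W xlo xhi i ->
  xlo i <= z <= xhi i -> xlo i <= z' <= xhi i ->
  (dpayoff i d z - dpayoff i d z') * (z - z') <= - c * (z - z') ^+ 2.
Proof.
move=> d_range zX z'X; have [_ concave] := payoff_concave i d d_range.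
have := concave _ (deriv_on_payoff d_range) z z' zX z'X.
have := concave _ (deriv_on_payoff d_range) z' z z'X zX.
rewrite (_ : (z' - z) ^+ 2 = (z - z') ^+ 2); last by ring.
by lra.
Qed.

Lemma dpayoff_lipschitz i z d d' : xlo i <= z <= xhi i ->
  dlo W xlo xhi i <= d <= dhi W xlo xhi i -> dlo W xlo xhi i <= d' <= dhi W xlo xhi i ->
  `|dpayoff i d z - dpayoff i d' z| <= gamma i * L0 * `|d - d'|.
Proof.
move=> /andP[zlo zhi] /andP[dlo_le dhi_ge] /andP[dlo_le' dhi_ge'].
rewrite /dpayoff -mulrBr opprB addrA subrK normrM gtr0_norm // -mulrA ler_pM2l //.
have zdK : klo W xlo xhi i <= z + d <= khi W xlo xhi i by apply/andP; split; apply: lerD.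
have zdK' : klo W xlo xhi i <= z + d' <= khi W xlo xhi i by apply/andP; split; apply: lerD.
by have := df_lipschitz i _ _ zdK zdK'; rewrite opprD addrACA subrr add0r.
Qed.

Lemma prox_point_coord x y z z' i : in_X xlo xhi x -> in_X xlo xhi y ->
  prox_point x z -> prox_point y z' ->
  (1 + c) * (z i - z' i) ^+ 2 <= (x i - y i) * (z i - z' i)
    + L0 * (gamma i * `|z i - z' i| * \sum_(j < n | j != i) `|W i j| * `|x j - y j|).
Proof.
move=> xX yX [zX z_opt] [z'X z'_opt].
have d_range := ext_gain_bounds i xX; have d'_range := ext_gain_bounds i yX.
have opt := z_opt i _ (z'X i); have opt' := z'_opt i _ (zX i).
have mono := dpayoff_strongly_monotone d_range (zX i) (z'X i).
have lip := dpayoff_lipschitz (z'X i) d_range d'_range.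
have gain_dist := ext_gain_dist x y i.
move: opt opt' mono lip gain_dist.
set d := ext_gain x i; set d' := ext_gain y i; set e := z i - z' i.
set S := \sum_(j < n | j != i) _.
move=> opt opt' mono lip gain_dist.
have cross : (dpayoff i d (z' i) - dpayoff i d' (z' i)) * e <= gamma i * L0 * S * `|e|.
  apply: le_trans (ler_norm _) _; rewrite normrM; apply: ler_wpM2r => //.
  by apply: le_trans lip (ler_wpM2l _ gain_dist); exact: mulr_ge0 (ltW (gamma_gt0 i)) L0_ge0.
by rewrite /e in opt opt' mono cross *; lra.
Qed.

Variable s : R.
Hypothesis s_ge0 : 0 <= s.
Hypothesis Sigma_norm : forall u, sqnorm (mxv (Sigma W gamma) u) <= s ^+ 2 * sqnorm u.

Lemma prox_point_contraction x y z z' : in_X xlo xhi x -> in_X xlo xhi y ->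
  prox_point x z -> prox_point y z' ->
  (1 + c) * enorm (z \- z') <= (1 + L0 * s) * enorm (x \- y).
Proof.
move=> xX yX z_prox z'_prox.
have enorm_abs u : enorm (fun i => `|u i|) = enorm u by rewrite /enorm sqnorm_abs.
set e := z \- z'; set dx := x \- y.
pose ext_err := \sum_i gamma i * `|e i| * (\sum_(j < n | j != i) `|W i j| * `|dx j|).
have coord_sum : (1 + c) * sqnorm e <= dotv dx e + L0 * ext_err.
  rewrite /sqnorm /dotv /ext_err mulr_sumr mulr_sumr -big_split /=.
  by apply: ler_sum => i _; exact: prox_point_coord.
have ext_err_le : ext_err <= s * (enorm dx * enorm e).
  have gamma_ge0 k : 0 <= gamma k by exact: ltW.
  have abs_ge0 (u : 'I_n -> R) i : 0 <= `|u i| by exact: normr_ge0.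
  apply: le_trans (Sigma_weighted_bound W_diag gamma_ge0 (abs_ge0 e) (abs_ge0 dx)) _.
  apply: le_trans (dotv_le_enorm _ _) _; rewrite enorm_abs mulrCA.
  apply: ler_wpM2l; first exact: enorm_ge0.
  rewrite -[s]ger0_norm // -sqrtr_sqr -sqrtrM ?sqr_ge0 // ler_sqrt ?mulr_ge0 ?sqr_ge0 ?sqnorm_ge0 //.
  by rewrite -(sqnorm_abs e); exact: Sigma_norm.
have key : (1 + c) * enorm e ^+ 2 <= (1 + L0 * s) * enorm dx * enorm e.
  rewrite sqr_enorm; apply: le_trans coord_sum _.
  by have := ler_wpM2l L0_ge0 ext_err_le; have := dotv_le_enorm dx e; lra.
have [e0|e_neq0] := eqVneq (enorm e) 0.
  by rewrite e0 mulr0 mulr_ge0 ?enorm_ge0 // addr_ge0 ?mulr_ge0.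
have e_gt0 : 0 < enorm e by rewrite lt_def e_neq0 enorm_ge0.
by rewrite -(ler_pM2r e_gt0) -mulrA -expr2.
Qed.

Hypothesis L0s_lt_c : L0 * s < c.

Lemma prox_fixed_point_unique x y : prox_point x x -> prox_point y y -> x = y.
Proof.
move=> x_fix y_fix; have := prox_point_contraction x_fix.1 y_fix.1 x_fix y_fix => contr.
have : (c - L0 * s) * enorm (x \- y) <= 0 by lra.
rewrite pmulr_rle0 ?subr_gt0 // => xy_le0.
have xy0 : enorm (x \- y) = 0 by apply/le_anti; rewrite xy_le0 enorm_ge0.
by apply/funext => i; apply/eqP; rewrite -subr_eq0; exact/eqP/(enorm_eq0 xy0).
Qed.

Lemma exists_prox_fixed_point : exists x, prox_point x x.
Proof.
have /choice [T T_prox] : forall x, exists z, in_X xlo xhi x -> prox_point x z.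
  move=> x; have [xX|xNX] := pselect (in_X xlo xhi x); last by exists x => /xNX.
  by have [z z_prox] := exists_prox_point xX; exists z.
suff [x xX Tx] : exists2 x, in_X xlo xhi x & T x = x.
  by exists x; rewrite -{2}Tx; exact: T_prox.
have c1_gt0 : 0 < 1 + c by rewrite ltr_wpDr.
apply: (box_contraction_fixed_point (q := (1 + L0 * s) / (1 + c))) xlo_le_xhi _ _ _.
- by rewrite ltr_pdivrMr // mul1r ltrD2l.
- by move=> x xX; exact: (T_prox x xX).1.
- move=> x y xX yX; rewrite mulrAC ler_pdivlMr // mulrC.
  exact: prox_point_contraction (T_prox x xX) (T_prox y yX).
Qed.

Lemma exists_unique_nash : exists! x, nash_equilibrium W xlo xhi f cst x.
Proof.
have [x x_fix] := exists_prox_fixed_point.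
exists x; split; first exact: prox_point_nash.
by move=> y /nash_prox_point y_fix; exact: prox_fixed_point_unique.
Qed.

End NetworkGame.

Theorem theorem3p6 (R : realType) (n : nat) (W : 'M[R]_n)
  (xlo xhi : 'I_n -> R)
  (f df cst dcst : 'I_n -> R -> R)
  (gamma : 'I_n -> R) (c L0 : R) :
  (forall i, W i i = 1) ->
  (forall i, xlo i <= xhi i) ->
  (* f_i : K_i -> R twice differentiable, concave, strictly increasing *)
  (forall i, deriv_on (klo W xlo xhi i) (khi W xlo xhi i) (f i) (df i)) ->
  (forall i, exists d2f, deriv_on (klo W xlo xhi i) (khi W xlo xhi i) (df i) d2f) ->
  (forall i, concave_on (klo W xlo xhi i) (khi W xlo xhi i) (f i)) ->
  (forall i, strictly_increasing_on (klo W xlo xhi i) (khi W xlo xhi i) (f i)) ->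
  (* c_i : X_i -> R twice differentiable, convex, strictly increasing *)
  (forall i, deriv_on (xlo i) (xhi i) (cst i) (dcst i)) ->
  (forall i, exists d2c, deriv_on (xlo i) (xhi i) (dcst i) d2c) ->
  (forall i, convex_on (xlo i) (xhi i) (cst i)) ->
  (forall i, strictly_increasing_on (xlo i) (xhi i) (cst i)) ->
  (* assumptions of the theorem *)
  (forall i, 0 < gamma i) -> 0 <= c -> 0 <= L0 ->
  (forall i d, dlo W xlo xhi i <= d <= dhi W xlo xhi i ->
     c_concave_on (xlo i) (xhi i) c
       (fun x => gamma i * (f i (x + d) - cst i x))) ->
  (forall i, lipschitz_on (klo W xlo xhi i) (khi W xlo xhi i) L0 (df i)) ->
  (forall s, singular_value (Sigma W gamma) s -> L0 * s < c) ->
  exists! x : 'I_n -> R, nash_equilibrium W xlo xhi f cst x.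
Proof.
move=> W_diag lohi f_der _ _ _ cst_der _ _ _ gamma_gt0 c_ge0 L0_ge0 payoff_conc df_lip sv_lt.
destruct n as [|m].
  exists xlo; split; first by split=> -[].
  by move=> y _; apply/funext => -[].
have [s sv Sigma_norm] := singular_value_bound (Sigma W gamma).
exact: (exists_unique_nash W_diag lohi f_der cst_der gamma_gt0 c_ge0 L0_ge0 payoff_conc df_lip
  sv.1 Sigma_norm (sv_lt s sv)).
Qed.
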